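(* Let $A\subseteq B$ be a ring extension (commutative rings with identity) and let $\mathfrak a$ be a $B$-regular ideal of $A$. Then the following conditions are equivalent: (i) $\mathfrak a$ is faithfully flat as an $A$-module; (ii) $\mathfrak a$ is locally principal, i.e. $\mathfrak aA_{\mathfrak m}$ is a principal ideal of $A_{\mathfrak m}$ for every maximal ideal $\mathfrak m$ of $A$.
   Context: An $A$-submodule $S$ of $B$ is called $B$-regular if $SB=B$. ''Ideal'' means an (integral) ideal of $A$. *)

From HB Require Import structures.
From mathcomp Require Import all_boot all_order all_algebra.
Set Implicit Arguments. Unset Strict Implicit. Unset Printing Implicit Defensive.
Import GRing.Theory.
Local Open Scope ring_scope.

Section Defs.
Variable A : comPzRingType.

Definition is_ideal (I : A -> Prop) : Prop :=
  [/\ I 0,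
      (forall x y, I x -> I y -> I (x + y)) &
      (forall r x, I x -> I (r * x))].

Definition is_maximal_ideal (m : A -> Prop) : Prop :=
  [/\ is_ideal m, ~ m 1 &
      (forall J : A -> Prop, is_ideal J -> (forall x, m x -> J x) ->
         J 1 \/ (forall x, J x <-> m x))].

(* Localization at the complement S = A \ m of a maximal ideal m, described
   by fractions x/s with s not in m:
   loc_eq m x s y t  <->  x/s = y/t in A_m, i.e. u*(x*t - y*s) = 0 for some u not in m. *)
Definition loc_eq (m : A -> Prop) (x s y t : A) : Prop :=
  exists u, ~ m u /\ u * (x * t - y * s) = 0.

(* x/s belongs to the extended ideal I A_m = S^{-1} I = { a/u : a in I, u not in m } *)
Definition in_loc_ideal (I m : A -> Prop) (x s : A) : Prop :=
  exists a u, [/\ I a, ~ m u & loc_eq m x s a u].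

(* I A_m is a principal ideal of A_m: I A_m = (g/gs) A_m for some g/gs in A_m *)
Definition loc_principal (I m : A -> Prop) : Prop :=
  exists g gs, ~ m gs /\
    forall x s, ~ m s ->
      (in_loc_ideal I m x s <->
       exists r rs, ~ m rs /\ loc_eq m x s (r * g) (rs * gs)).

Definition locally_principal (I : A -> Prop) : Prop :=
  forall m, is_maximal_ideal m -> loc_principal I m.

(* A-bilinear maps I x N -> P (given as functions A -> N -> P, only their
   behaviour on I x N matters). *)
Definition bilinear_on (I : A -> Prop) (N P : lmodType A) (beta : A -> N -> P) :=
  [/\ (forall x y n, I x -> I y -> beta (x + y) n = beta x n + beta y n),
      (forall r x n, I x -> beta (r * x) n = r *: beta x n),
      (forall x n n', I x -> beta x (n + n') = beta x n + beta x n') &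
      (forall r x n, I x -> beta x (r *: n) = r *: beta x n)].

(* The element \sum_(p <- s) p.1 (x) p.2 of the tensor product I (x)_A N is zero
   (universal property of the tensor product: it is killed by every
   A-bilinear map out of I x N). *)
Definition ideal_tensor_zero (I : A -> Prop) (N : lmodType A) (s : seq (A * N)) :=
  forall (P : lmodType A) (beta : A -> N -> P), bilinear_on I beta ->
    \sum_(p <- s) beta p.1 p.2 = 0.

(* I is flat as an A-module: I (x)_A - preserves injective A-linear maps *)
Definition flat_ideal (I : A -> Prop) : Prop :=
  forall (N N' : lmodType A) (g : {linear N -> N'}), injective g ->
    forall s : seq (A * N), (forall p, p \in s -> I p.1) ->
      ideal_tensor_zero I [seq (p.1, g p.2) | p <- s] ->
      ideal_tensor_zero I s.

(* I is faithfully flat: flat, and I (x)_A N = 0 implies N = 0 *)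
Definition faithfully_flat_ideal (I : A -> Prop) : Prop :=
  flat_ideal I /\
  forall N : lmodType A,
    (forall x (n : N), I x -> ideal_tensor_zero I [:: (x, n)]) ->
    forall n : N, n = 0.

End Defs.

(* For a ring extension f : A -> B (injective), the A-submodule I of A is
   B-regular: I B = B, where I B = { \sum f(a_i) b_i : a_i in I, b_i in B }. *)
Definition B_regular (A B : comPzRingType) (f : {rmorphism A -> B}) (I : A -> Prop) :=
  forall b : B, exists s : seq (A * B),
    (forall p, p \in s -> I p.1) /\ b = \sum_(p <- s) f p.1 * p.2.

(* (ii) ⇒ (i): at a maximal ideal m, local principality gives x0 ∈ a such that
   every x ∈ a satisfies s x = r x0 with s ∉ m, and B-regularity
   (1 = Σ f(a_i) b_i) gives t ∉ m killing the annihilator of x0.  Hence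
   x ⊗ n ↦ (r/s) n is a well-defined bilinear map a × N → N_m, which turns a
   vanishing tensor Σ x_i ⊗ n_i into a relation holding in N_m.  Flatness and
   faithfulness of a then follow because an element of a module that is zero
   locally at every maximal ideal is zero.
   (i) ⇒ (ii): faithfulness gives x ∈ a with x ⊗ n ≠ 0 in a ⊗ A/m.  For y ∈ a,
   the map (w1, w2) ↦ w1 y - w2 x embeds A²/K into A, where K is the module of
   relations w1 y = w2 x, so by flatness x ⊗ e1 + y ⊗ e2 = 0 in a ⊗ A²/K.  If
   every relation had w1 ∈ m, then (w1, w2) ↦ w1 n would send this to x ⊗ n ≠ 0;
   hence c y = d x for some c ∉ m, and x generates a A_m. *)

From HB Require Import structures.
From mathcomp Require Import all_boot all_order all_algebra.
From mathcomp Require Import boolp classical_sets.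
From mathcomp Require Import ring.
Set Implicit Arguments. Unset Strict Implicit. Unset Printing Implicit Defensive.
Import GRing.Theory.
Local Open Scope ring_scope.
Local Open Scope quotient_scope.

Section Submodules.
Variable A : comPzRingType.

Definition multiplicative_set (S : A -> Prop) :=
  S 1 /\ forall u v, S u -> S v -> S (u * v).

Definition is_submodule (M : lmodType A) (L : M -> Prop) :=
  [/\ L 0, forall x y, L x -> L y -> L (x + y) & forall r x, L x -> L (r *: x)].

Lemma one_multiplicative : multiplicative_set (eq^~ 1).
Proof. by split=> // u v -> ->; rewrite mulr1. Qed.

Lemma zero_submodule (M : lmodType A) : is_submodule (eq^~ (0 : M)).
Proof. by split=> [|x y -> ->|r x ->]; rewrite ?addr0 ?scaler0. Qed.

Lemma ideal_submodule (I : A -> Prop) : is_ideal I -> is_submodule (I : A^o -> Prop).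
Proof. by case. Qed.

End Submodules.

Arguments one_multiplicative {A}.

Section Localization.
Variables (A : comPzRingType) (S : A -> Prop) (M : lmodType A) (L : M -> Prop).
Hypotheses (hS : multiplicative_set S) (hL : is_submodule L).

Let S1 : S 1. Proof. by case: hS. Qed.
Let SM u v : S u -> S v -> S (u * v). Proof. by case: hS => _; apply. Qed.
Let L0 : L 0. Proof. by case: hL. Qed.
Let LD x y : L x -> L y -> L (x + y). Proof. by case: hL => _ + _; apply. Qed.
Let LZ r x : L x -> L (r *: x). Proof. by case: hL => _ _; apply. Qed.
Let LN x : L x -> L (- x). Proof. by rewrite -scaleN1r; apply: LZ. Qed.

Definition loc_pair := {p : M * A | `[< S p.2 >]}.
Definition num (p : loc_pair) := (val p).1.
Definition den (p : loc_pair) := (val p).2.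

Lemma denP p : S (den p). Proof. exact/asboolP/(valP p). Qed.

Definition mk_pair x s (hs : S s) : loc_pair := exist _ (x, s) (asboolT hs).

Lemma mk_pair_ext x y s t hs ht : x = y -> s = t -> @mk_pair x s hs = @mk_pair y t ht.
Proof. by move=> -> et; subst t; congr mk_pair; apply: Prop_irrelevance. Qed.

(* [Loc hS hL] is S⁻¹(M/L): the pair (x, s) stands for x/s, and x/s = y/t iff
   u (t x - s y) ∈ L for some u ∈ S. *)
Definition loc_rel p q : bool :=
  `[< exists2 u, S u & L (u *: (den q *: num p - den p *: num q)) >].

Lemma loc_relP p q :
  reflect (exists2 u, S u & L (u *: (den q *: num p - den p *: num q))) (loc_rel p q).
Proof. exact: asboolP. Qed.

Lemma loc_rel_eq p q : den q *: num p = den p *: num q -> loc_rel p q.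
Proof. by move=> e; apply/loc_relP; exists 1; rewrite // e subrr scaler0. Qed.

Lemma loc_rel_refl : reflexive loc_rel.
Proof. by move=> p; apply: loc_rel_eq. Qed.

Lemma loc_rel_sym : symmetric loc_rel.
Proof.
suff sym p q : loc_rel p q -> loc_rel q p by move=> p q; apply/idP/idP; apply: sym.
by case/loc_relP=> u Su Lu; apply/loc_relP; exists u; rewrite // -opprB scalerN; apply: LN.
Qed.

Lemma loc_rel_trans : transitive loc_rel.
Proof.
move=> q p r /loc_relP[u Su Lpq] /loc_relP[v Sv Lqr]; apply/loc_relP.
exists (u * v * den q); first by do 2?apply: SM => //; apply: denP.
have -> : (u * v * den q) *: (den r *: num p - den p *: num r) =
    (v * den r) *: (u *: (den q *: num p - den p *: num q)) +
    (u * den p) *: (v *: (den r *: num q - den q *: num r)).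
  have e : u * den p * v * den r = v * den r * u * den p by ring.
  rewrite !scalerBr !scalerA addrA e subrK.
  by congr (_ *: _ - _ *: _); ring.
by apply: LD; apply: LZ.
Qed.

Canonical loc_rel_equiv := EquivRel loc_rel loc_rel_refl loc_rel_sym loc_rel_trans.

Definition Loc := {eq_quot loc_rel}.
HB.instance Definition _ := Choice.on Loc.

Definition add_pair p q :=
  mk_pair (den q *: num p + den p *: num q) (SM (denP p) (denP q)).
Definition opp_pair p := mk_pair (- num p) (denP p).
Definition scale_pair r p := mk_pair (r *: num p) (denP p).
Definition zero_pair := mk_pair 0 S1.

Lemma add_pair_compat p p' q q' :
  loc_rel p p' -> loc_rel q q' -> loc_rel (add_pair p q) (add_pair p' q').
Proof.
move=> /loc_relP[u Su Lp] /loc_relP[v Sv Lq]; apply/loc_relP.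
exists (u * v); first exact: SM.
rewrite /add_pair /num /den /=.
have -> : (u * v) *: ((den p' * den q') *: (den q *: num p + den p *: num q) -
          (den p * den q) *: (den q' *: num p' + den p' *: num q')) =
    (v * den q * den q') *: (u *: (den p' *: num p - den p *: num p')) +
    (u * den p * den p') *: (v *: (den q' *: num q - den q *: num q')).
  rewrite !scalerBr !scalerDr !scalerA opprD addrACA.
  by congr (_ *: _ - _ *: _ + (_ *: _ - _ *: _)); ring.
by apply: LD; apply: LZ.
Qed.

Lemma opp_pair_compat p p' : loc_rel p p' -> loc_rel (opp_pair p) (opp_pair p').
Proof.
case/loc_relP=> u Su Lp; apply/loc_relP; exists u => //.
by rewrite /opp_pair /num /den /= !scalerN -opprD scalerN; apply: LN.
Qed.

Lemma scale_pair_compat r p p' : loc_rel p p' -> loc_rel (scale_pair r p) (scale_pair r p').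
Proof.
case/loc_relP=> u Su Lp; apply/loc_relP; exists u => //.
rewrite /scale_pair /num /den /=.
have -> : u *: (den p' *: (r *: num p) - den p *: (r *: num p')) =
    r *: (u *: (den p' *: num p - den p *: num p')).
  by rewrite !scalerBr !scalerA; congr (_ *: _ - _ *: _); ring.
exact: LZ.
Qed.

Lemma repr_pi_rel p : loc_rel (repr (\pi_Loc p)) p.
Proof. by apply/eqmodP; rewrite reprK. Qed.

Definition loc_add := lift_op2 Loc add_pair.
Lemma pi_add : {morph \pi_Loc : x y / add_pair x y >-> loc_add x y}.
Proof.
move=> x y; unlock loc_add; apply/eqmodP.
by apply: add_pair_compat; rewrite loc_rel_sym repr_pi_rel.
Qed.
Canonical pi_add_morph := PiMorph2 pi_add.

Definition loc_opp := lift_op1 Loc opp_pair.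
Lemma pi_opp : {morph \pi_Loc : x / opp_pair x >-> loc_opp x}.
Proof.
move=> x; unlock loc_opp; apply/eqmodP.
by apply: opp_pair_compat; rewrite loc_rel_sym repr_pi_rel.
Qed.
Canonical pi_opp_morph := PiMorph1 pi_opp.

Definition loc_scale r := lift_op1 Loc (scale_pair r).
Lemma pi_scale r : {morph \pi_Loc : x / scale_pair r x >-> loc_scale r x}.
Proof.
move=> x; unlock loc_scale; apply/eqmodP.
by apply: scale_pair_compat; rewrite loc_rel_sym repr_pi_rel.
Qed.
Canonical pi_scale_morph r := PiMorph1 (pi_scale r).

Definition loc_zero : Loc := \pi_Loc zero_pair.

Lemma loc_addA : associative loc_add.
Proof.
elim/quotW=> x; elim/quotW=> y; elim/quotW=> z; rewrite !piE; congr \pi.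
apply: mk_pair_ext; rewrite /num /den /=; last by ring.
by rewrite !scalerDr !scalerA addrA; congr (_ *: _ + _ *: _ + _ *: _); ring.
Qed.

Lemma loc_addC : commutative loc_add.
Proof.
elim/quotW=> x; elim/quotW=> y; rewrite !piE; congr \pi.
by apply: mk_pair_ext; rewrite /num /den /= (addrC, mulrC).
Qed.

Lemma loc_add0 : left_id loc_zero loc_add.
Proof.
elim/quotW=> x; rewrite /loc_zero !piE; congr \pi; apply: val_inj.
by rewrite /= /num /den /= scaler0 add0r scale1r mul1r; case: (val x).
Qed.

Lemma loc_addN : left_inverse loc_zero loc_opp loc_add.
Proof.
elim/quotW=> x; rewrite /loc_zero !piE; apply/eqmodP; apply: loc_rel_eq.
by rewrite /num /den /= scaler0 scale1r scalerN addNr.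
Qed.

HB.instance Definition _ := GRing.isZmodule.Build Loc loc_addA loc_addC loc_add0 loc_addN.

Lemma loc_scaleA a b (v : Loc) : loc_scale a (loc_scale b v) = loc_scale (a * b) v.
Proof.
elim/quotW: v => x; rewrite !piE; congr \pi.
by apply: mk_pair_ext; rewrite /num /den //= scalerA.
Qed.

Lemma loc_scale1 : left_id 1 loc_scale.
Proof.
elim/quotW=> x; rewrite !piE; congr \pi; apply: val_inj.
by rewrite /= /num /den /= scale1r; case: (val x).
Qed.

Lemma loc_scaleDr : right_distributive loc_scale +%R.
Proof.
move=> r; elim/quotW=> x; elim/quotW=> y; rewrite /GRing.add /= !piE; congr \pi.
by apply: mk_pair_ext; rewrite /num /den //= scalerDr !scalerA mulrC [r * _]mulrC.
Qed.

Lemma loc_scaleDl v : {morph loc_scale^~ v : a b / a + b}.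
Proof.
move=> a b; elim/quotW: v => x; rewrite /GRing.add /= !piE; apply/eqmodP.
apply: loc_rel_eq; rewrite /num /den /= !scalerA scalerDr !scalerA mulrDr scalerDl.
by congr (_ *: _ + _ *: _); ring.
Qed.

HB.instance Definition _ :=
  GRing.Zmodule_isLmodule.Build A Loc loc_scaleA loc_scale1 loc_scaleDr loc_scaleDl.

Definition frac x s (hs : S s) : Loc := \pi_Loc (mk_pair x hs).

Lemma fracP x s hs y t ht :
  @frac x s hs = @frac y t ht <-> exists2 u, S u & L (u *: (t *: x - s *: y)).
Proof. by split=> [/eqmodP/loc_relP // | e]; apply/eqmodP/loc_relP. Qed.

Lemma frac_ext x y s t hs ht : x = y -> s = t -> @frac x s hs = @frac y t ht.
Proof. by move=> ex es; rewrite /frac (mk_pair_ext hs ht ex es). Qed.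

Lemma frac_eq0 x s hs : @frac x s hs = 0 <-> exists2 u, S u & L (u *: x).
Proof. by rewrite -[0]/(frac 0 S1) fracP scale1r scaler0 subr0. Qed.

Lemma frac0 s (hs : S s) : frac 0 hs = 0.
Proof. by apply/frac_eq0; exists 1; rewrite // scaler0. Qed.

Lemma fracD x s hs y t ht :
  @frac x s hs + @frac y t ht = frac (t *: x + s *: y) (SM hs ht).
Proof. by rewrite -[_ + _]/(loc_add _ _) /frac piE; apply: frac_ext. Qed.

Lemma fracZ r x s hs : r *: @frac x s hs = frac (r *: x) hs.
Proof. by rewrite -[_ *: _]/(loc_scale r _) /frac piE; apply: frac_ext. Qed.

Lemma fracD_common x y s (hs : S s) : frac x hs + frac y hs = frac (x + y) hs.
Proof.
by rewrite fracD fracP; exists 1; rewrite // scale1r -scalerDr scalerA subrr.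
Qed.

Lemma frac_sum (I : Type) (l : seq I) (F : I -> M) s (hs : S s) :
  \sum_(i <- l) frac (F i) hs = frac (\sum_(i <- l) F i) hs.
Proof.
elim: l => [|i l IHl]; last by rewrite !big_cons IHl fracD_common.
by rewrite !big_nil frac0.
Qed.

Lemma fracE (q : Loc) : exists x s (hs : S s), q = frac x hs.
Proof.
elim/quotW: q => p; exists (num p), (den p), (denP p); congr \pi.
by case: p => [[x s] hp]; apply: val_inj.
Qed.

End Localization.

Arguments frac {A S M L hS hL} x {s} hs.

Section LocMap.
Variables (A : comPzRingType) (S : A -> Prop) (M1 M2 : lmodType A).
Variables (L1 : M1 -> Prop) (L2 : M2 -> Prop).
Hypotheses (hS : multiplicative_set S) (hL1 : is_submodule L1) (hL2 : is_submodule L2).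
Variable psi : {linear M1 -> M2}.
Hypothesis psiL : forall v, L1 v -> L2 (psi v).

Definition loc_fun (q : Loc hS hL1) : Loc hS hL2 := frac (psi (num (repr q))) (denP (repr q)).

Lemma loc_fun_frac x s (hs : S s) : loc_fun (frac x hs) = frac (psi x) hs.
Proof.
have /loc_relP[u Su Lu] := repr_pi_rel hS hL1 (mk_pair x hs).
apply/fracP; exists u => //; rewrite -!(linearZZ psi) -linearB -linearZZ; apply: psiL.
by rewrite /num /den /= in Lu; rewrite /num /den.
Qed.

Lemma loc_fun_is_linear : linear loc_fun.
Proof.
move=> r q1 q2; have [x [s [hs ->]]] := fracE q1; have [y [t [ht ->]]] := fracE q2.
rewrite fracZ fracD !loc_fun_frac fracZ fracD.
by apply: frac_ext; rewrite // !scalerA linearP linearZZ.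
Qed.

Definition loc_map : {linear Loc hS hL1 -> Loc hS hL2} :=
  HB.pack loc_fun (GRing.isLinear.Build _ _ _ _ loc_fun loc_fun_is_linear).

Lemma loc_map_frac x s (hs : S s) : loc_map (frac x hs) = frac (psi x) hs.
Proof. exact: loc_fun_frac. Qed.

Lemma loc_map_inj : (forall v, L2 (psi v) -> L1 v) -> injective loc_map.
Proof.
move=> psiL'; suff ker0 q : loc_map q = 0 -> q = 0 by apply/raddf_inj => q /ker0.
have [x [s [hs ->]]] := fracE q; rewrite loc_map_frac => /frac_eq0[u Su Lu].
by apply/frac_eq0; exists u => //; apply: psiL'; rewrite linearZZ.
Qed.

End LocMap.

Section MaximalIdeals.
Variable A : comPzRingType.
Local Open Scope classical_set_scope.

Lemma maximal_ideal_coprime (m : A -> Prop) w : is_maximal_ideal m -> ~ m w ->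
  exists k r, m k /\ 1 = k + r * w.
Proof.
move=> [[m0 mD mM] _ mmax] mw.
pose J z := exists k r, m k /\ z = k + r * w.
have JI : is_ideal J.
  split; first by exists 0, 0; rewrite mul0r addr0.
  - move=> _ _ [k [r [mk ->]]] [k' [r' [mk' ->]]].
    by exists (k + k'), (r + r'); split; [apply: mD | ring].
  - move=> r _ [k [r' [mk ->]]].
    by exists (r * k), (r * r'); split; [apply: mM | ring].
have mJ x : m x -> J x by exists x, 0; rewrite mul0r addr0.
have [//|Jm] := mmax J JI mJ.
by case: mw; apply/Jm; exists 0, 1; rewrite add0r mul1r.
Qed.

Lemma maximal_ideal_multiplicative (m : A -> Prop) :
  is_maximal_ideal m -> multiplicative_set (fun u : A => ~ m u).
Proof.
move=> hm; case: (hm) => [[_ mD mM] m1 _]; split=> // u v mu mv muv.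
have [k [r [mk e]]] := maximal_ideal_coprime hm mu.
have [k' [r' [mk' e']]] := maximal_ideal_coprime hm mv.
apply: m1; have -> : 1 = (k + r * u) * (k' + r' * v) by rewrite -e -e' mulr1.
have -> : (k + r * u) * (k' + r' * v) = (k' + r' * v) * k + r * u * k' + r * r' * (u * v).
  by ring.
by apply: (mD); [apply: (mD)|]; apply: (mM).
Qed.

Lemma chain_bigcup_ideal (C : set (set A)) : C !=set0 -> total_on C subset ->
  (forall J, C J -> is_ideal J) -> is_ideal (\bigcup_(J in C) J).
Proof.
move=> [J0 CJ0] Ctot CI; split.
- by exists J0 => //; case: (CI _ CJ0).
- move=> x y [J CJ Jx] [K CK Ky].
  have [JK|KJ] := Ctot J K CJ CK.
  + by exists K => //; case: (CI _ CK) => _ + _; apply => //; apply: JK.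
  + by exists J => //; case: (CI _ CJ) => _ + _; apply => //; apply: KJ.
- by move=> r x [J CJ Jx]; exists J => //; case: (CI _ CJ) => _ _; apply.
Qed.

Lemma exists_maximal_ideal (I : A -> Prop) : is_ideal I -> ~ I 1 ->
  exists2 m, is_maximal_ideal m & I `<=` m.
Proof.
move=> II nI1.
pose proper_above (J : set A) := [/\ is_ideal J, ~ J 1 & I `<=` J].
pose R (J K : set A) := `[< proper_above J -> proper_above K /\ J `<=` K >].
have pI : proper_above I by split=> // x.
have [t tmax] : exists t, premaximal R t.
  apply: (@ZL_preorder _ I R).
  - by move=> J; apply/asboolP => pJ; split=> // x.
  - move=> J K L /asboolP RJK /asboolP RKL; apply/asboolP => /RJK[/RKL[pL KL] JK].
    by split=> // x /JK /KL.
  - move=> C Ctot; pose C' := [set J | C J /\ proper_above J \/ J = I].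
    have C'p J : C' J -> proper_above J by case=> [[]|->].
    have C'tot : total_on C' subset.
      move=> J K CJ CK; have [_ _ IJ] := C'p _ CJ; have [_ _ IK] := C'p _ CK.
      case: CJ CK => [[CJ pJ]|->]; case=> [[CK pK]|->]; [|by right|by left|by left].
      by case: (Ctot J K CJ CK) => /asboolP RJK; [left; case: RJK | right; case: RJK].
    exists (\bigcup_(J in C') J) => J CJ; apply/asboolP => pJ.
    have sub : J `<=` \bigcup_(J in C') J by move=> x Jx; exists J => //; left.
    split=> //; split.
    + by apply: chain_bigcup_ideal => // [|K /C'p[]]; first by exists I; right.
    + by case=> K /C'p[].
    + by move=> x Ix; exists I => //; right.
have pt : proper_above t.
  apply: contrapT => npt.
  have /tmax /asboolP : R t I by apply/asboolP.
  by case/(_ pI).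
have [tI t1 It] := pt.
exists t => //; split => // J JI tJ.
have [|nJ1] := pselect (J 1); first by left.
right; have pJ : proper_above J by split=> // x /It /tJ.
have /tmax /asboolP : R t J by apply/asboolP.
by case/(_ pJ) => _ Jt x; split; [apply: Jt | apply: tJ].
Qed.

Lemma locally_eq0 (P : lmodType A) (z : P) :
  (forall m, is_maximal_ideal m -> exists2 u, ~ m u & u *: z = 0) -> z = 0.
Proof.
move=> zloc; pose ann u := u *: z = 0.
have annI : is_ideal ann.
  split; first exact: scale0r.
  - by move=> x y xz yz; rewrite /ann scalerDl xz yz addr0.
  - by move=> r x xz; rewrite /ann -scalerA xz scaler0.
have [ann1|] := pselect (ann 1); first by rewrite -[z]scale1r.
move=> /(exists_maximal_ideal annI)[m hm annm].
by have [u mu /annm] := zloc m hm.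
Qed.

End MaximalIdeals.

Section Bilinear.
Variables (A : comPzRingType) (I : A -> Prop) (N P : lmodType A) (beta : A -> N -> P).
Hypothesis bil : bilinear_on I beta.

Lemma bilinear_on_0r x : I x -> beta x 0 = 0.
Proof. by case: bil => _ _ _ betaZ Ix; rewrite -(scale0r 0) betaZ // scale0r. Qed.

Lemma bilinear_on_sumr x (T : Type) (l : seq T) (F : T -> N) : I x ->
  beta x (\sum_(i <- l) F i) = \sum_(i <- l) beta x (F i).
Proof.
move=> Ix; elim: l => [|i l IHl]; first by rewrite !big_nil bilinear_on_0r.
by case: bil => _ _ betaD _; rewrite !big_cons betaD // IHl.
Qed.

Lemma bilinear_on_0l n : I 0 -> beta 0 n = 0.
Proof. by case: bil => _ betaZ _ _ I0; rewrite -(mul0r 0) betaZ // scale0r. Qed.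

Lemma bilinear_on_sum_scale x0 sg (rho : A -> A) (s : seq (A * N)) : I x0 ->
  (forall p, p \in s -> I p.1 /\ sg * p.1 = rho p.1 * x0) ->
  sg *: \sum_(p <- s) beta p.1 p.2 = beta x0 (\sum_(p <- s) rho p.1 *: p.2).
Proof.
case: bil => _ betaZl _ betaZr Ix0 sP; rewrite scaler_sumr bilinear_on_sumr //.
by apply: eq_big_seq => p /sP[Ip e]; rewrite -betaZl // e betaZl // betaZr.
Qed.

Lemma bilinear_on_comp (N' : lmodType A) (h : {linear N' -> N}) :
  bilinear_on I (fun x n => beta x (h n)).
Proof.
case: bil => betaDl betaZl betaDr betaZr.
by split=> [x y n|r x n|x n n'|r x n] Ix *;
  rewrite ?betaDl ?betaZl ?linearD ?linearZZ ?betaDr ?betaZr.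
Qed.

End Bilinear.

Lemma ideal_tensor_zero_map (A : comPzRingType) (I : A -> Prop) (N N' : lmodType A)
    (h : {linear N -> N'}) (s : seq (A * N)) :
  ideal_tensor_zero I s -> ideal_tensor_zero I [seq (p.1, h p.2) | p <- s].
Proof. by move=> tz P beta bil; rewrite big_map; apply: (tz P _ (bilinear_on_comp bil h)). Qed.

(* [x0] generates [a A_m]. *)
Definition local_generator (A : comPzRingType) (a m : A -> Prop) (x0 : A) :=
  a x0 /\ forall x, a x -> exists s r, ~ m s /\ s * x = r * x0.

Section LocalGenerator.
Variables (A : comPzRingType) (a m : A -> Prop).
Hypotheses (aI : is_ideal a) (hm : is_maximal_ideal m).

Let nm1 : ~ m 1. Proof. by case: hm. Qed.
Let nmM u v : ~ m u -> ~ m v -> ~ m (u * v).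
Proof. by case: (maximal_ideal_multiplicative hm) => _; apply. Qed.

Lemma loc_principalP : loc_principal a m <-> exists x0, local_generator a m x0.
Proof.
split=> [[g [gs [ngs gP]]] | [x0 [ax0 x0P]]].
  have [a0 [u0 [aa0 nu0 [v [nv ev]]]]] : in_loc_ideal a m g gs.
    by apply/(gP _ _ ngs); exists 1, 1; split=> //; exists 1; split=> //; ring.
  exists a0; split=> // x ax.
  have [r [rs [nrs [w [nw ew]]]]] : exists r rs, ~ m rs /\ loc_eq m x 1 (r * g) (rs * gs).
    by apply/(gP _ _ nm1); exists x, 1; split=> //; exists 1; split=> //; ring.
  exists (v * u0 * w * rs * gs), (w * r * v * gs); split; first by do ![apply: (nmM) | done].
  apply/eqP; rewrite -subr_eq0; apply/eqP.
  have -> : v * u0 * w * rs * gs * x - w * r * v * gs * a0 =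
      v * u0 * (w * (x * (rs * gs) - r * g * 1)) + w * r * (v * (g * u0 - a0 * gs)) by ring.
  by rewrite ew ev !mulr0 addr0.
exists x0, 1; split=> // x s ns; split.
  move=> [y [u [ay nu [w [nw ew]]]]].
  have [c [d [nc ecd]]] := x0P y ay.
  exists d, (u * c); split; first exact: nmM.
  exists w; split=> //.
  have -> : w * (x * (u * c * 1) - d * x0 * s) =
      c * (w * (x * u - y * s)) + w * s * (c * y - d * x0) by ring.
  by rewrite ew ecd subrr !mulr0 addr0.
move=> [r [rs [nrs exs]]]; exists (r * x0), (rs * 1); split=> //.
  by case: aI => _ _; apply.
by rewrite mulr1.
Qed.

Variable x0 : A.
Hypothesis gx0 : local_generator a m x0.

Lemma common_denominator (l : seq A) : (forall x, x \in l -> a x) ->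
  exists sg (rho : A -> A), ~ m sg /\ forall x, x \in l -> sg * x = rho x * x0.
Proof.
elim: l => [|y l IHl] al; first by exists 1, (fun=> 0).
case: IHl => [x xl | sg [rho [nsg rhoP]]]; first by apply: al; rewrite inE xl orbT.
have [s0 [r0 [ns0 e0]]] := gx0.2 y (al y (mem_head y l)).
exists (s0 * sg), (fun x => if x == y then sg * r0 else s0 * rho x); split; first exact: nmM.
move=> x; rewrite inE; case: eqP => [-> _ | _ /= xl]; first by rewrite mulrAC e0; ring.
by rewrite -mulrA rhoP // mulrA.
Qed.

Lemma B_regular_ann (B : comPzRingType) (f : {rmorphism A -> B}) :
  injective f -> B_regular f a -> exists2 t, ~ m t & forall y, y * x0 = 0 -> t * y = 0.
Proof.
move=> finj /(_ 1)[s [sa e1]].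
have [sg [rho [nsg rhoP]]] : exists sg (rho : A -> A),
    ~ m sg /\ forall x, x \in [seq p.1 | p <- s] -> sg * x = rho x * x0.
  by apply: common_denominator => _ /mapP[p ps ->]; apply: sa.
exists sg => // y yx0; apply: finj; rewrite rmorph0 -[f _]mulr1 e1 mulr_sumr.
apply: big1_seq => p /andP[_ ps]; rewrite mulrA -rmorphM.
have -> : sg * y * p.1 = rho p.1 * (y * x0).
  by rewrite mulrAC rhoP; [ring | apply/mapP; exists p].
by rewrite yx0 mulr0 rmorph0 mul0r.
Qed.

Let Sm := maximal_ideal_multiplicative hm.

Variable t : A.
Hypotheses (nt : ~ m t) (tx0 : forall y, y * x0 = 0 -> t * y = 0).

Lemma frac_coord_eq (N : lmodType A) (n : N) x s r s' r' (ns : ~ m s) (ns' : ~ m s') :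
  s * x = r * x0 -> s' * x = r' * x0 ->
  frac (r *: n) ns = frac (r' *: n) ns' :> Loc Sm (zero_submodule N).
Proof.
move=> e e'; apply/fracP; exists t => //.
rewrite !scalerA -scalerBl scalerA (_ : t * _ = 0) ?scale0r //.
by apply: tx0; rewrite mulrBl -!mulrA -e -e'; ring.
Qed.

Lemma tensor_zero_local (N : lmodType A) (s : seq (A * N)) sg (rho : A -> A) :
  ~ m sg -> (forall p, p \in s -> a p.1 /\ sg * p.1 = rho p.1 * x0) ->
  ideal_tensor_zero a s -> exists2 u, ~ m u & u *: \sum_(p <- s) rho p.1 *: p.2 = 0.
Proof.
move=> nsg sP tz.
have /choice[F FP] : forall x, exists q : A * A, ~ m q.1 /\ (a x -> q.1 * x = q.2 * x0).
  move=> x; have [ax|nax] := pselect (a x); last by exists (1, 0); split=> // /nax.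
  by have [s' [r [ns' e]]] := gx0.2 x ax; exists (s', r).
pose beta x (n : N) : Loc Sm (zero_submodule N) := frac ((F x).2 *: n) (proj1 (FP x)).
have betaE x s' r (ns' : ~ m s') n : a x -> s' * x = r * x0 -> beta x n = frac (r *: n) ns'.
  by move=> ax; apply: frac_coord_eq; apply: (proj2 (FP x)).
have bil : bilinear_on a beta.
  have [_ aD aM] := aI.
  split=> [x y n ax ay | r x n ax | x n n' ax | r x n ax].
  - have [nsx /(_ ax) ex] := FP x; have [nsy /(_ ay) ey] := FP y.
    have exy : (F x).1 * (F y).1 * (x + y) = ((F y).1 * (F x).2 + (F x).1 * (F y).2) * x0.
      transitivity ((F y).1 * ((F x).1 * x) + (F x).1 * ((F y).1 * y)); first by ring.
      by rewrite ex ey; ring.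
    rewrite (betaE _ _ _ (nmM nsx nsy) n (aD _ _ ax ay) exy) fracD.
    by apply: frac_ext; rewrite // scalerDl !scalerA.
  - have [nsx /(_ ax) ex] := FP x.
    have erx : (F x).1 * (r * x) = r * (F x).2 * x0 by rewrite mulrCA ex mulrA.
    rewrite (betaE _ _ _ nsx n (aM _ _ ax) erx) fracZ.
    by apply: frac_ext; rewrite // scalerA.
  - by rewrite fracD_common; apply: frac_ext; rewrite // scalerDr.
  - by rewrite fracZ; apply: frac_ext; rewrite // !scalerA mulrC.
have := tz _ beta bil.
rewrite (eq_big_seq (fun p => frac (rho p.1 *: p.2) nsg)) => [|p /sP[ap ep]].
  by rewrite frac_sum => /frac_eq0.
exact: betaE.
Qed.

End LocalGenerator.

Section LocallyPrincipalFaithfullyFlat.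
Variables (A B : comPzRingType) (f : {rmorphism A -> B}) (a : A -> Prop).
Hypotheses (finj : injective f) (aI : is_ideal a) (breg : B_regular f a).
Hypothesis lp : locally_principal a.

Lemma locally_principal_generator m : is_maximal_ideal m -> exists x0,
  local_generator a m x0 /\ exists2 t, ~ m t & forall y, y * x0 = 0 -> t * y = 0.
Proof.
move=> hm; have [x0 gx0] := (loc_principalP aI hm).1 (lp hm).
by exists x0; split=> //; exact: (B_regular_ann hm gx0 finj breg).
Qed.

Lemma locally_principal_flat : flat_ideal a.
Proof.
move=> N N' g ginj s sa tz P beta bil; apply: locally_eq0 => m hm.
have [x0 [gx0 [t nt tx0]]] := locally_principal_generator hm.
have [sg [rho [nsg rhoP]]] : exists sg (rho : A -> A),
    ~ m sg /\ forall x, x \in [seq p.1 | p <- s] -> sg * x = rho x * x0.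
  by apply: (common_denominator hm gx0) => _ /mapP[p ps ->]; apply: sa.
have sP p : p \in s -> a p.1 /\ sg * p.1 = rho p.1 * x0.
  by move=> ps; split; [apply: sa | apply: rhoP; apply/mapP; exists p].
have gsP p : p \in [seq (p.1, g p.2) | p <- s] -> a p.1 /\ sg * p.1 = rho p.1 * x0.
  by case/mapP=> q qs ->; apply: sP.
have [u nu] := tensor_zero_local aI hm gx0 nt tx0 nsg gsP tz.
rewrite big_map /= => gu0.
have u0 : u *: \sum_(p <- s) rho p.1 *: p.2 = 0.
  apply: ginj; rewrite linear0 -gu0 linearZ_LR linear_sum; congr (_ *: _).
  by apply: eq_bigr => p _; rewrite linearZ_LR.
exists (u * sg); first by case: (maximal_ideal_multiplicative hm) => _; apply.
have [[ax0 _] [_ _ _ betaZr]] := (gx0, bil).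
by rewrite -scalerA (bilinear_on_sum_scale bil ax0 sP) -betaZr // u0 (bilinear_on_0r bil).
Qed.

Lemma locally_principal_faithful (N : lmodType A) :
  (forall x (n : N), a x -> ideal_tensor_zero a [:: (x, n)]) -> forall n : N, n = 0.
Proof.
move=> tz n; apply: locally_eq0 => m hm.
have [x0 [gx0 [t nt tx0]]] := locally_principal_generator hm.
have [_ nm1 _] := hm.
have sP p : p \in [:: (x0, n)] -> a p.1 /\ 1 * p.1 = (fun=> 1) p.1 * x0.
  by rewrite inE => /eqP -> /=; split=> //; case: gx0.
have [u nu] := tensor_zero_local aI hm gx0 nt tx0 (rho := fun=> 1) nm1 sP (tz x0 n gx0.1).
by rewrite big_seq1 scale1r; exists u.
Qed.

End LocallyPrincipalFaithfullyFlat.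

Definition pair_comb (A : comPzRingType) (b c : A) (w : A^o * A^o) : A^o := w.1 * b + w.2 * c.

Lemma pair_comb_is_linear (A : comPzRingType) (b c : A) : linear (pair_comb b c).
Proof.
move=> r [u v] [u' v']; rewrite /pair_comb /=.
by rewrite -[r *: u]/(r * u) -[r *: v]/(r * v) -[r *: _]/(r * _); ring.
Qed.

HB.instance Definition _ (A : comPzRingType) (b c : A) :=
  GRing.isLinear.Build A (A^o * A^o)%type A^o _ (pair_comb b c) (pair_comb_is_linear b c).

Section Relations.
Variables (A : comPzRingType) (x y : A).

Definition relations (w : A^o * A^o) := w.1 * y = w.2 * x.

Lemma relations_submodule : is_submodule relations.
Proof.
split=> [|w w' e e'|r w e]; rewrite /relations /=; first by rewrite !mul0r.
  by rewrite !mulrDl e e'.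
by rewrite /GRing.scale /= -!mulrA e.
Qed.

Lemma relationsE w : relations w <-> pair_comb y (- x) w = 0.
Proof. by rewrite /pair_comb mulrN; split=> [->|/eqP]; rewrite ?subrr // subr_eq0 => /eqP. Qed.

Definition rel_class (w : A^o * A^o) : Loc one_multiplicative relations_submodule :=
  frac w (erefl 1).

Lemma flat_relations_tensor_zero (a : A -> Prop) : is_ideal a -> flat_ideal a ->
  a x -> a y -> ideal_tensor_zero a [:: (x, rel_class (1, 0)); (y, rel_class (0, 1))].
Proof.
move=> aI fl ax ay.
pose one : Loc one_multiplicative (zero_submodule A^o) := frac (1 : A^o) (erefl 1).
have [g gE ginj] : exists2 g : {linear Loc one_multiplicative relations_submodule ->
    Loc one_multiplicative (zero_submodule A^o)},
    forall w, g (rel_class w) = ((w.1 : A) * y - (w.2 : A) * x) *: one & injective g.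
  exists (loc_map _ _ (zero_submodule A^o) (fun w => (relationsE w).1)).
    move=> w; rewrite loc_map_frac fracZ; apply: frac_ext => //.
    by rewrite /= /pair_comb mulrN; symmetry; apply: mulr1.
  by apply: loc_map_inj => w /relationsE.
apply: (fl _ _ g ginj); first by move=> p; rewrite !inE => /orP[] /eqP ->.
move=> P gam gbil; rewrite big_cons big_seq1 /= !gE /=.
have [a0 _ aM] := aI; have [gamDl gamZl _ gamZr] := gbil.
rewrite !gamZr // -!gamZl // -gamDl; [|exact: aM..].
have -> : (1 * y - 0 * x) * x + (0 * y - 1 * x) * y = 0 by ring.
by rewrite (bilinear_on_0l gbil).
Qed.

End Relations.

Section FaithfullyFlatLocallyPrincipal.
Variables (A : comPzRingType) (a m : A -> Prop).
Hypotheses (aI : is_ideal a) (hm : is_maximal_ideal m).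

Let mI : is_ideal m. Proof. by case: hm. Qed.
(* With S = {1}, [Loc] is the plain quotient A/m. *)
Local Notation residue := (Loc one_multiplicative (ideal_submodule mI)).

Lemma faithful_residue_witness : faithfully_flat_ideal a ->
  exists x (n : residue) (P : lmodType A) (beta : A -> residue -> P),
    [/\ a x, bilinear_on a beta & beta x n <> 0].
Proof.
move=> [_ faithful]; apply: contrapT => nowit.
have [_ nm1 _] := hm.
suff /frac_eq0[u -> m1] : frac (1 : A^o) (erefl 1) = 0 :> residue
  by apply: nm1; rewrite scale1r in m1.
apply: faithful => x n ax P beta bil; rewrite big_seq1.
by apply: contrapT => nb; apply: nowit; exists x, n, P, beta.
Qed.

Lemma flat_local_generator x (n : residue) (P : lmodType A) (beta : A -> residue -> P) :
  flat_ideal a -> a x -> bilinear_on a beta -> beta x n <> 0 -> local_generator a m x.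
Proof.
move=> fl ax bil nb; split=> // y ay; apply: contrapT => nyx.
have [r [s [s1 en]]] := fracE n; subst n s.
have mu_rel w : relations x y w -> m (pair_comb (r : A) 0 w).
  move=> e; have [mw1|nw1] := pselect (m w.1); last by case: nyx; exists w.1, w.2.
  by rewrite /pair_comb mulr0 addr0 mulrC; case: mI => _ _; apply.
have := ideal_tensor_zero_map (loc_map _ _ (ideal_submodule mI) mu_rel)
  (flat_relations_tensor_zero aI fl ax ay) bil.
rewrite big_map big_cons big_seq1 !loc_map_frac /= /pair_comb !mul0r !mulr0 !addr0 mul1r frac0.
by rewrite (bilinear_on_0r bil) // addr0.
Qed.

End FaithfullyFlatLocallyPrincipal.

Lemma faithfully_flat_locally_principal (A : comPzRingType) (a : A -> Prop) :
  is_ideal a -> faithfully_flat_ideal a -> locally_principal a.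
Proof.
move=> aI ff m hm; apply/(loc_principalP aI hm).
have [x [n [P [beta [ax bil nb]]]]] := faithful_residue_witness hm ff.
by exists x; apply: (flat_local_generator aI) ax bil nb; case: ff.
Qed.

Theorem proposition2p3 (A B : comPzRingType) (f : {rmorphism A -> B})
  (a : A -> Prop) :
  injective f -> is_ideal a -> B_regular f a ->
  (faithfully_flat_ideal a <-> locally_principal a).
Proof.
move=> finj aI breg; split; first exact: faithfully_flat_locally_principal.
move=> lp; split; first exact: locally_principal_flat finj aI breg lp.
exact: locally_principal_faithful finj aI breg lp.
Qed.
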